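(* If $A\subseteq\mathbb{Z}^d$ is finite, then $\|\min_{\preceq}(A^* )\|\leq d\cdot\left(2+(1+2\cdot\|A\|)^d\cdot\|A\|\right)^d$.
   Context: $A^*$ is the submonoid of $(\mathbb{Z}^d,+)$ generated by $A$ (finite sums of elements of $A$). For $x\in\mathbb{Z}^d$, $\|x\|=\max_i|x(i)|$; for a finite set $Y$, $\|Y\|=\max_{y\in Y}\|y\|$ (with $\max\emptyset=0$). The partial order $\preceq$ on $\mathbb{Z}^d$: $x\preceq y$ iff $x$ and $y$ have the same componentwise sign vector and $|x(i)|\leq|y(i)|$ for all $i$; $\min_{\preceq}(Y)$ is the (finite) set of $\preceq$-minimal elements of $Y$. *)

From mathcomp Require Import all_boot all_order all_algebra.
Set Implicit Arguments. Unset Strict Implicit. Unset Printing Implicit Defensive.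
Import Order.TTheory GRing.Theory Num.Theory.
Local Open Scope ring_scope.

Definition vec (d : nat) := {ffun 'I_d -> int}.

(* A^* : submonoid of (Z^d,+) generated by A (finite sums of elements of A,
   the empty sum being 0). A finite set A is given as a finite list. *)
Inductive in_monoid (d : nat) (A : seq (vec d)) : vec d -> Prop :=
| in_monoid0 : in_monoid A 0
| in_monoidS : forall x a, in_monoid A x -> a \in A -> in_monoid A (x + a).

Definition vnorm (d : nat) (x : vec d) : nat := (\max_(i < d) `|x i|%N)%N.

(* ||Y|| = max_{y in Y} ||y||, with max of the empty set = 0 *)
Definition snorm (d : nat) (Y : seq (vec d)) : nat := (\max_(y <- Y) vnorm y)%N.

Definition vle (d : nat) (x y : vec d) : Prop :=
  forall i : 'I_d, sgz (x i) = sgz (y i) /\ (`|x i| <= `|y i|)%N.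

Definition minimal_in (d : nat) (Y : vec d -> Prop) (y : vec d) : Prop :=
  Y y /\ forall x, Y x -> vle x y -> x = y.

(* Flipping signs coordinatewise, we may assume y >= 0 and write
   y = sum_j c_j v_j over the distinct elements v_j of A.  Call c minimal when
   it cannot be split into two nonzero parts whose combinations both lie in
   the nonnegative orthant.

   Let x = sum_j c_j v_j for a minimal c, with K = sum_j c_j summands, J of
   them distinct, and M = ||A||.  Add the summands one at a time in a balanced
   order (after t steps every count u_j is within one of t c_j / K): then the
   differences between the partial sums and the lattice points floor(t x / K)
   all lie in one box of side 2MJ + M + 1.  Letting the i-th coordinate of the
   lattice point run through each a < x_i gives x_i such points, pairwise
   distinct by minimality, so x_i <= (2MJ + M + 1)^d.  Minimality also makes
   0, the support vectors v_j and their opposites pairwise distinct points of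
   [-M, M]^d, so 1 + 2J <= (2M + 1)^d.  Finally a minimal y is the sum of at
   most d minimal combinations, one for each positive coordinate. *)

From mathcomp Require Import all_boot all_order all_algebra.
From mathcomp Require Import zify ring.
From Stdlib Require Import Classical.
Set Implicit Arguments. Unset Strict Implicit. Unset Printing Implicit Defensive.
Import Order.TTheory GRing.Theory Num.Theory.
Local Open Scope ring_scope.

Lemma leq_exp2rW (a b e : nat) : (a <= b)%N -> (a ^ e <= b ^ e)%N.
Proof. by case: e => // e; rewrite leq_exp2r. Qed.

Definition nonneg d (x : vec d) := forall i, 0 <= x i.

Lemma vecDE d (x y : vec d) i : (x + y) i = x i + y i.
Proof. by rewrite ffunE. Qed.

Lemma vecNE d (x : vec d) i : (- x) i = - x i.
Proof. by rewrite ffunE. Qed.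

Lemma vecBE d (x y : vec d) i : (x - y) i = x i - y i.
Proof. by rewrite vecDE vecNE. Qed.

Lemma in_monoidD d (A : seq (vec d)) x y :
  in_monoid A x -> in_monoid A y -> in_monoid A (x + y).
Proof. by move=> xA; elim=> [|z a _ IHz aA]; rewrite ?addr0 // addrA; constructor. Qed.

Section Coefficients.
Variable m : nat.
Implicit Types c : {ffun 'I_m -> nat}.

Definition coef_size c := (\sum_(j < m) c j)%N.

Definition coef_le c1 c2 := forall j, (c1 j <= c2 j)%N.

Definition coef_sub c2 c1 : {ffun 'I_m -> nat} := [ffun j => c2 j - c1 j]%N.

Definition delta_coef (j : 'I_m) : {ffun 'I_m -> nat} :=
  [ffun k => if k == j then 1 else 0]%N.

Definition supp c := [set j | 0 < c j]%N.

Lemma coef_size0 : coef_size 0 = 0%N.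
Proof. by rewrite /coef_size big1 // => j _; rewrite ffunE. Qed.

Lemma coef_sizeD c1 c2 : coef_size (c1 + c2) = (coef_size c1 + coef_size c2)%N.
Proof. by rewrite /coef_size -big_split; apply: eq_bigr => j _; rewrite ffunE. Qed.

Lemma coef_size_delta j : coef_size (delta_coef j) = 1%N.
Proof.
rewrite /coef_size (bigD1 j) //= ffunE eqxx big1 // => k /negbTE nkj.
by rewrite ffunE nkj.
Qed.

Lemma coef_size_gt0 c : (0 < coef_size c)%N = (c != 0).
Proof.
apply/idP/idP => [|nz_c]; first by apply: contraTneq => ->; rewrite coef_size0.
rewrite lt0n; apply: contra_neq nz_c; rewrite /coef_size => /eqP.
rewrite sum_nat_eq0 => /forallP c0.
by apply/ffunP => j; rewrite ffunE; apply/eqP; exact: c0.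
Qed.

Lemma coef_subnK c1 c2 : coef_le c1 c2 -> c1 + coef_sub c2 c1 = c2.
Proof. by move=> le12; apply/ffunP => j; rewrite /coef_sub !ffunE; exact: subnKC. Qed.

End Coefficients.

Section LinearCombinations.
Variables (d m : nat) (v : 'I_m -> vec d).
Implicit Types c : {ffun 'I_m -> nat}.

Definition lcomb c : vec d := \sum_(j < m) v j *+ c j.

Definition minimal_solution c :=
  nonneg (lcomb c) /\
  forall c1 c2, c = c1 + c2 -> nonneg (lcomb c1) -> nonneg (lcomb c2) ->
    c1 = 0 \/ c2 = 0.

Lemma lcombE c i : lcomb c i = \sum_(j < m) v j i * (c j)%:Z.
Proof.
by rewrite sum_ffunE; apply: eq_bigr => j _; rewrite ffunMnE -mulr_natr natz.
Qed.

Lemma lcomb0 : lcomb 0 = 0.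
Proof. by rewrite /lcomb big1 // => j _; rewrite ffunE mulr0n. Qed.

Lemma lcombD c1 c2 : lcomb (c1 + c2) = lcomb c1 + lcomb c2.
Proof. by rewrite /lcomb -big_split; apply: eq_bigr => j _; rewrite ffunE mulrnDr. Qed.

Lemma lcomb_delta j : lcomb (delta_coef j) = v j.
Proof.
rewrite /lcomb (bigD1 j) //= ffunE eqxx mulr1n big1 ?addr0 // => k /negbTE nkj.
by rewrite ffunE nkj mulr0n.
Qed.

Lemma in_monoid_lcomb A c : (forall j, v j \in A) -> in_monoid A (lcomb c).
Proof.
move=> vA; apply: (big_ind (in_monoid A)) => [|x y|j _].
- exact: in_monoid0.
- exact: in_monoidD.
- by elim: (c j) => [|n IHn]; rewrite ?mulr0n ?mulrSr; constructor.
Qed.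

Lemma lcomb_of_in_monoid A x :
  (forall a, a \in A -> exists j, v j = a) -> in_monoid A x -> exists c, x = lcomb c.
Proof.
move=> Av; elim=> [|y a _ [c ->] /Av [j <-]]; first by exists 0; rewrite lcomb0.
by exists (c + delta_coef j); rewrite lcombD lcomb_delta.
Qed.

End LinearCombinations.

Section ProportionalChain.
Variables (m : nat) (c : {ffun 'I_m -> nat}).
Implicit Types u : {ffun 'I_m -> nat}.

Definition balanced u := coef_le u c /\ forall j k, (u j * c k <= (u k).+1 * c j)%N.

Lemma balanced0 : balanced 0.
Proof. by split=> [j|j k]; rewrite ffunE. Qed.

Lemma balanced_size_le u j :
  balanced u -> (coef_size u * c j <= coef_size c * (u j).+1)%N.
Proof.
case=> _ bal; rewrite /coef_size !big_distrl /=.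
by apply: leq_sum => k _; rewrite [X in (_ <= X)%N]mulnC bal.
Qed.

Definition lagging u j :=
  (u j < c j)%N && [forall k, (u k < c k)%N ==> ((u j).+1 * c k <= (u k).+1 * c j)%N].

Lemma exists_lagging u j0 : (u j0 < c j0)%N -> exists j, lagging u j.
Proof.
pose ratio j : rat := (u j).+1%:R / (c j)%:R.
move=> lt_j0; have [j lt_j min_j] := arg_minP (P := [pred j | u j < c j]%N) ratio lt_j0.
exists j; apply/andP; split=> //; apply/forallP => k; apply/implyP => lt_k.
have := min_j k lt_k; rewrite /ratio ler_pdivrMr ?ltr0n ?(leq_ltn_trans _ lt_j) //.
by rewrite mulrAC ler_pdivlMr ?ltr0n ?(leq_ltn_trans _ lt_k) // -!natrM ler_nat.
Qed.

(* [j] minimises [(u j + 1) / c j] among the unfinished indices, so raising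
   [u j] overtakes none of them; finished indices are safe as [u j < c j]. *)
Lemma balanced_lagging u j : balanced u -> lagging u j -> balanced (u + delta_coef j).
Proof.
case=> le_uc bal /andP[lt_j /forallP min_j].
split=> [k|a b]; rewrite !ffunE.
  by case: eqP => [->|_] /=; have := le_uc k; lia.
have := bal a b; have := bal a j; have := le_uc b; have := implyP (min_j b).
by case: (a =P j) => [->|_]; case: (b =P j) => [->|_] /=; nia.
Qed.

Definition next_coef u :=
  if [pick j | lagging u j] is Some j then u + delta_coef j else u.

Lemma next_coefP u : (coef_size u < coef_size c)%N ->
  exists2 j, lagging u j & next_coef u = u + delta_coef j.
Proof.
move=> lt_uc; have [j0 lt_j0] : exists j0, (u j0 < c j0)%N.
  case: (pickP (fun j => u j < c j)%N) => [j0 ?|ge_uc]; first by exists j0.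
  by move: lt_uc; rewrite ltnNge leq_sum // => j _; rewrite leqNgt ge_uc.
rewrite /next_coef; case: pickP => [j lag_j|no_lag]; first by exists j.
by have [j lag_j] := exists_lagging lt_j0; move: (no_lag j); rewrite lag_j.
Qed.

Definition chain t := iter t next_coef 0.

Lemma chainP t : (t <= coef_size c)%N -> balanced (chain t) /\ coef_size (chain t) = t.
Proof.
elim: t => [_|t IHt lt_tc]; first by split; [exact: balanced0 | exact: coef_size0].
have [bal_t size_t] := IHt (ltnW lt_tc).
have [j lag_j ->] : exists2 j, lagging (chain t) j & chain t.+1 = chain t + delta_coef j.
  by apply: next_coefP; rewrite size_t.
by rewrite coef_sizeD coef_size_delta size_t addn1; split=> //; apply: balanced_lagging.
Qed.

Lemma chain_incr t t' : (t <= t' <= coef_size c)%N -> exists r, chain t' = chain t + r.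
Proof.
elim: t' => [|t' IHt'] /andP[le_tt' le_t'c].
  by exists 0; move: le_tt'; rewrite leqn0 => /eqP ->; rewrite addr0.
case: (ltngtP t t'.+1) le_tt' => // [lt_tt'|<-] _; last by exists 0; rewrite addr0.
have [j _ ->] : exists2 j, lagging (chain t') j & chain t'.+1 = chain t' + delta_coef j.
  by apply: next_coefP; rewrite (chainP (ltnW le_t'c)).2.
have [r ->] : exists r, chain t' = chain t + r by apply: IHt'; rewrite -ltnS lt_tt' ltnW.
by exists (r + delta_coef j); rewrite addrA.
Qed.

End ProportionalChain.

Lemma box_size_le d (lo : vec d) (w : nat) (L : seq (vec d)) :
  (0 < w)%N -> uniq L ->
  (forall x : vec d, x \in L -> forall i, lo i <= x i < lo i + w%:Z) ->
  (size L <= w ^ d)%N.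
Proof.
case: w => // w _ uniq_L L_box.
pose corner (g : {ffun 'I_d -> 'I_w.+1}) : vec d := [ffun i => lo i + (g i : nat)%:Z].
have -> : (w.+1 ^ d)%N = #|{ffun 'I_d -> 'I_w.+1}| by rewrite card_ffun !card_ord.
rewrite -(size_image corner); apply: uniq_leq_size => // x xL; apply/imageP.
have x_lo i : `|x i - lo i|%N%:Z = x i - lo i.
  by rewrite gez0_abs // subr_ge0; case/andP: (L_box x xL i).
exists [ffun i => inord `|x i - lo i|%N] => //; apply/ffunP => i.
rewrite !ffunE inordK ?x_lo; first by rewrite addrC subrK.
by rewrite -ltz_nat x_lo; case/andP: (L_box x xL i) => _; rewrite -ltrBlDl.
Qed.

Section BoundedGenerators.
Variables (d m M : nat) (v : 'I_m -> vec d).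
Hypothesis v_bound : forall j i, `|v j i| <= M%:Z.

Lemma lcomb_norm_le c i : `|lcomb v c i| <= M%:Z * (coef_size c)%:Z.
Proof.
rewrite lcombE /coef_size (big_morph _ PoszD (erefl 0%Z)) mulr_sumr.
apply: le_trans (ler_norm_sum _ _ _) _; apply: ler_sum => j _.
by rewrite normrM [`|(c j)%:Z|]ger0_norm // ler_wpM2r.
Qed.

(* The quantity below is [\sum_j v j i * D j] with
   [D j = K u_j - t c_j + K [c_j > 0]], which balance makes nonnegative and
   which sum to [K J]. *)
Lemma balanced_deviation c u i : balanced c u ->
  `|(coef_size c)%:Z * lcomb v u i - (coef_size u)%:Z * lcomb v c i
    + (coef_size c)%:Z * \sum_(j in supp c) v j i|
  <= M%:Z * ((coef_size c)%:Z * #|supp c|%:Z).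
Proof.
move=> bal; set K := coef_size c; set t := coef_size u.
pose D j : int :=
  (K * u j)%:Z - (t * c j)%:Z + (if j \in supp c then K%:Z else 0).
have D_ge0 j : 0 <= D j.
  rewrite /D inE; have := balanced_size_le j bal; have := bal.1 j.
  by case: (posnP (c j)) => [->|_] /=; lia.
have -> : K%:Z * lcomb v u i - t%:Z * lcomb v c i + K%:Z * \sum_(j in supp c) v j i
    = \sum_j v j i * D j.
  rewrite !lcombE !mulr_sumr -sumrB [X in _ + X]big_mkcond -big_split /=.
  by apply: eq_bigr => j _; rewrite /D; case: ifP => _; rewrite !PoszM; ring.
have sumD : \sum_j D j = K%:Z * #|supp c|%:Z.
  rewrite big_split sumrB /= -big_mkcond sumr_const /=.
  rewrite -!(big_morph _ PoszD (erefl 0%Z)) -!big_distrr /= -/K -/t mulnC subrr add0r.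
  by rewrite -mulr_natr natz.
rewrite -sumD mulr_sumr; apply: le_trans (ler_norm_sum _ _ _) _.
by apply: ler_sum => j _; rewrite normrM (ger0_norm (D_ge0 j)) ler_wpM2r.
Qed.

End BoundedGenerators.

Section MinimalSolution.
Variables (d m M : nat) (v : 'I_m -> vec d) (c : {ffun 'I_m -> nat}) (i0 : 'I_d).
Hypotheses (v_bound : forall j i, `|v j i| <= M%:Z) (c_min : minimal_solution v c).
Hypothesis x_i0_gt0 : 0 < lcomb v c i0.

Local Notation x := (lcomb v c).
Local Notation K := (coef_size c).
Local Notation xn i := `|lcomb v c i|%N.

Lemma xnE i : (xn i)%:Z = x i.
Proof. exact/gez0_abs/c_min.1. Qed.

Lemma coef_neq0 : c != 0.
Proof. by apply: contraTneq x_i0_gt0 => ->; rewrite lcomb0 ffunE ltxx. Qed.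

Let K_gt0 : (0 < K)%N. Proof. by rewrite coef_size_gt0 coef_neq0. Qed.

Definition xfloor t i := (t * xn i %/ K)%N.

Lemma xfloor0 i : xfloor 0 i = 0%N.
Proof. by rewrite /xfloor mul0n div0n. Qed.

Lemma xfloor_size i : xfloor K i = xn i.
Proof. by rewrite /xfloor mulKn. Qed.

Lemma xfloor_mono i t t' : (t <= t')%N -> (xfloor t i <= xfloor t' i)%N.
Proof. by move=> le_tt'; rewrite leq_div2r // leq_mul2r le_tt' orbT. Qed.

Lemma xfloor_le t i : (t <= K)%N -> (xfloor t i <= xn i)%N.
Proof. by move=> le_tK; rewrite -xfloor_size xfloor_mono. Qed.

(* [step_of a] is the step [t] of the chain during which the floor of the
   [i0]-th coordinate of [t x / K] passes [a]. *)
Definition step_of a : 'I_K :=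
  [arg max_(t > Ordinal K_gt0 | (xfloor t i0 <= a)%N) (t : nat)].

Lemma step_ofP a :
  (xfloor (step_of a) i0 <= a)%N /\
  forall t : 'I_K, (xfloor t i0 <= a)%N -> (t <= step_of a)%N.
Proof. by rewrite /step_of; case: arg_maxnP => [|s]; rewrite ?xfloor0. Qed.

Lemma step_of_mono a a' : (a <= a')%N -> (step_of a <= step_of a')%N.
Proof. by move=> le_aa'; apply: (step_ofP a').2; apply: leq_trans (step_ofP a).1 _. Qed.

Lemma lt_xfloor_step_of a : (a < xn i0)%N -> (a < xfloor (step_of a).+1 i0)%N.
Proof.
move=> lt_a; case: (ltnP (step_of a).+1 K) => [lt_sK|le_Ks].
  rewrite ltnNge; apply/negP => le_fa.
  by have := (step_ofP a).2 (Ordinal lt_sK) le_fa; rewrite /= ltnn.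
have -> : (step_of a).+1 = K by apply/eqP; rewrite eqn_leq ltn_ord.
by rewrite xfloor_size.
Qed.

Definition offset a i : nat := if i == i0 then a else xfloor (step_of a) i.

Definition point a : vec d :=
  lcomb v (chain c (step_of a).+1) - [ffun i => (offset a i)%:Z].

Lemma offset_between a i : (a < xn i0)%N ->
  (xfloor (step_of a) i <= offset a i <= xfloor (step_of a).+1 i)%N.
Proof.
move=> lt_a; rewrite /offset; case: eqP => [->|_].
  by rewrite (step_ofP a).1 ltnW ?lt_xfloor_step_of.
by rewrite leqnn xfloor_mono.
Qed.

Lemma offset_mono a a' i : (a <= a')%N -> (offset a i <= offset a' i)%N.
Proof.
by move=> le_aa'; rewrite /offset; case: eqP => // _; rewrite xfloor_mono ?step_of_mono.
Qed.

Lemma offset_le a i : (a < xn i0)%N -> (offset a i <= xn i)%N.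
Proof.
move=> lt_a; case/andP: (offset_between i lt_a) => _ /leq_trans; apply.
exact/xfloor_le/ltn_ord.
Qed.

Definition box_corner : vec d :=
  [ffun i => - \sum_(j in supp c) v j i - (M * #|supp c|)%N%:Z].

Lemma point_in_box a i : (a < xn i0)%N ->
  box_corner i <= point a i < box_corner i + (2 * M * #|supp c| + M + 1)%N%:Z.
Proof.
move=> lt_a; set t := (step_of a : nat).
have [bal size_u] := chainP (ltn_ord (step_of a)).
have dev := balanced_deviation v_bound i bal; rewrite size_u ler_norml in dev.
have /andP[lo_off hi_off] := offset_between i lt_a.
have off_le : (K * offset a i <= t.+1 * xn i)%N.
  by apply: leq_trans (leq_divM _ K); rewrite mulnC leq_mul2r hi_off orbT.
have off_gt : (t * xn i < K * (offset a i).+1)%N.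
  by apply: leq_trans (ltn_ceil _ K_gt0) _; rewrite mulnC leq_mul2l ltnS lo_off orbT.
have x_le := le_trans (ler_norm _) (lcomb_norm_le v_bound c i).
rewrite /point /box_corner vecBE !ffunE -xnE in x_le dev *.
rewrite -(ler_pM2l (_ : 0 < K%:Z)) // -(ltr_pM2l (_ : 0 < K%:Z)) //.
by nia.
Qed.

(* Two points from different steps would make the chain increment between
   them a nonzero proper part of [c] with combination between [0] and [x]. *)
Lemma point_neq a a' : (a < xn i0)%N -> (a' < xn i0)%N ->
  (step_of a < step_of a')%N -> point a != point a'.
Proof.
move=> lt_a lt_a' lt_s; apply/eqP => eq_p.
have le_aa' : (a <= a')%N.
  by rewrite leqNgt; apply: contraL lt_s => /ltnW/step_of_mono; rewrite -leqNgt.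
have [[le_u'c _] size_u'] := chainP (ltn_ord (step_of a')).
have size_u := (chainP (ltn_ord (step_of a))).2.
set u := chain c (step_of a).+1; set u' := chain c (step_of a').+1.
have [r Er] : exists r, u' = u + r by apply: chain_incr; rewrite ltnS ltnW //= ltn_ord.
have lcomb_r i : lcomb v r i = (offset a' i)%:Z - (offset a i)%:Z.
  have := congr1 (fun p : vec d => p i) eq_p.
  by rewrite /point -/u -/u' Er lcombD !vecBE vecDE !ffunE; lia.
have Ec : c = r + (u + coef_sub c u') by rewrite addrA [r + u]addrC -Er coef_subnK.
have x_split i : lcomb v (u + coef_sub c u') i = x i - lcomb v r i.
  by rewrite [in x i]Ec [lcomb v (r + _)]lcombD vecDE addrAC subrr add0r.
have [r0|rest0] : r = 0 \/ u + coef_sub c u' = 0.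
- apply: (c_min.2 _ _ Ec) => i; first by rewrite lcomb_r subr_ge0 lez_nat offset_mono.
  by rewrite x_split lcomb_r -xnE; have := offset_le i lt_a'; lia.
- by move: size_u'; rewrite -/u' Er r0 addr0 -/u size_u; lia.
- by have := x_split i0; rewrite rest0 lcomb0 ffunE lcomb_r /offset eqxx -xnE; lia.
Qed.

Lemma point_inj : {in [pred a | a < xn i0]%N &, injective point}.
Proof.
suff point_inj_le a a' : (a < xn i0)%N -> (a' < xn i0)%N -> (a <= a')%N ->
    point a = point a' -> a = a'.
  by move=> a a' lt_a lt_a' eq_p; case: (leqP a a') => [|/ltnW] le;
    [exact: point_inj_le | symmetry; exact: point_inj_le].
move=> lt_a lt_a' le_aa' eq_p.
case: (ltngtP (step_of a) (step_of a')) => [lt_s|lt_s|eq_s].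
- by move/eqP: eq_p; rewrite (negbTE (point_neq lt_a lt_a' lt_s)).
- by move: lt_s; rewrite ltnNge step_of_mono.
have := congr1 (fun p : vec d => p i0) eq_p.
by rewrite /point eq_s !vecBE !ffunE /offset eqxx; lia.
Qed.

Lemma minimal_coord_le_box : (xn i0 <= (2 * M * #|supp c| + M + 1) ^ d)%N.
Proof.
rewrite -(size_iota 0 (xn i0)) -(size_map point).
apply: (box_size_le (lo := box_corner)); first by rewrite addn1.
  rewrite map_inj_in_uniq ?iota_uniq // => a a'.
  by rewrite !mem_iota => /andP[_ lt_a] /andP[_ lt_a']; apply: point_inj.
by move=> p /mapP[a]; rewrite mem_iota add0n => /andP[_ lt_a] -> i; apply: point_in_box.
Qed.

Lemma lcomb_part_neq0 r : coef_le r c -> r != 0 -> lcomb v r != 0.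
Proof.
move=> le_rc nz_r; apply/eqP => r0.
have Ec : c = r + coef_sub c r by rewrite coef_subnK.
have [r_eq0|rest0] : r = 0 \/ coef_sub c r = 0.
- apply: (c_min.2 _ _ Ec) => i; first by rewrite r0 ffunE.
  by have := c_min.1 i; rewrite [in x]Ec lcombD r0 add0r.
- by move/eqP: nz_r.
- by move: x_i0_gt0; rewrite Ec rest0 addr0 r0 ffunE ltxx.
Qed.

Lemma supp_vec_neq0 j : j \in supp c -> v j != 0.
Proof.
move=> jS; rewrite -(lcomb_delta v) lcomb_part_neq0 -?coef_size_gt0 ?coef_size_delta //.
by move=> k; rewrite ffunE; case: eqP => [->|//]; rewrite inE in jS.
Qed.

Lemma supp_vec_neq_opp j k : j \in supp c -> k \in supp c -> v j != - v k.
Proof.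
rewrite !inE => cj ck; case: (eqVneq j k) => [<-|njk].
  apply: contra (supp_vec_neq0 (j := j) _) => [/eqP vj|]; last by rewrite inE.
  apply/eqP/ffunP => i; have := congr1 (fun p : vec d => p i) vj.
  by rewrite vecNE ffunE => /esym/eqP; rewrite eqNr => /eqP.
rewrite -subr_eq0 opprK -(lcomb_delta v) -(lcomb_delta v k) -lcombD.
rewrite lcomb_part_neq0 -?coef_size_gt0 ?coef_sizeD ?coef_size_delta // => l.
rewrite !ffunE; case: (l =P j) => [->|_] /=; first by rewrite (negbTE njk); lia.
by case: (l =P k) => [->|_] /=; lia.
Qed.

Hypothesis v_inj : injective v.

(* [0], the support vectors and their opposites are pairwise distinct points
   of the box [[-M, M]^d]. *)
Lemma supp_card_le : (1 + 2 * #|supp c| <= (2 * M + 1) ^ d)%N.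
Proof.
set S := enum (supp c).
have <- : size (0 :: map v S ++ map (fun j => - v j) S) = (1 + 2 * #|supp c|)%N.
  by rewrite /= size_cat !size_map /S -cardE add1n mul2n addnn.
apply: (box_size_le (lo := [ffun _ => - M%:Z])); rewrite ?addn1 //.
  rewrite /= mem_cat negb_or cat_uniq !map_inj_uniq ?enum_uniq //=; last first.
    by move=> j k /oppr_inj/v_inj.
  rewrite andbT -andbA; apply/and3P; split.
  - apply/negP => /mapP[j]; rewrite mem_enum => jS /esym/eqP.
    exact/negP/supp_vec_neq0.
  - apply/negP => /mapP[j]; rewrite mem_enum => jS /esym/eqP.
    by rewrite oppr_eq0; apply/negP/supp_vec_neq0.
  - apply/hasP => -[p /mapP[k kS ep] /mapP[j jS ep']].
    rewrite !mem_enum in jS kS.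
    by move/eqP: (supp_vec_neq_opp jS kS); rewrite -ep' -ep.
move=> p; rewrite in_cons mem_cat => /or3P[/eqP -> i|/mapP[j _ ->] i|/mapP[j _ ->] i].
- by rewrite !ffunE; lia.
- by have := v_bound j i; rewrite ffunE ler_norml; lia.
- by have := v_bound j i; rewrite vecNE ffunE ler_norml; lia.
Qed.

Lemma minimal_coord_le : (xn i0 <= (M * (2 * M + 1) ^ d + 1) ^ d)%N.
Proof.
apply: leq_trans minimal_coord_le_box _; apply: leq_exp2rW.
by have := supp_card_le; nia.
Qed.

End MinimalSolution.

Lemma minimal_solution_le d m M (v : 'I_m -> vec d) c i :
  (forall j i, `|v j i| <= M%:Z) -> injective v -> minimal_solution v c ->
  lcomb v c i <= ((M * (2 * M + 1) ^ d + 1) ^ d)%N%:Z.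
Proof.
move=> v_bound v_inj c_min.
case: (ltrP 0 (lcomb v c i)) => [x_pos|x_le0]; last exact: le_trans x_le0 _.
rewrite -(gez0_abs (ltW x_pos)) lez_nat.
exact: minimal_coord_le v_bound c_min x_pos v_inj.
Qed.

Section Decomposition.
Variables (d m : nat) (v : 'I_m -> vec d).

Lemma exists_minimal_part c i0 : nonneg (lcomb v c) -> 0 < lcomb v c i0 ->
  exists c1 c2,
    [/\ c = c1 + c2, minimal_solution v c1, nonneg (lcomb v c2) & 0 < lcomb v c1 i0].
Proof.
have [n] := ubnP (coef_size c); elim: n c => // n IHn c lt_cn c_ge0 c_pos.
have [[c1 [c2 [Ec c1_ge0 c2_ge0 nz1 nz2]]]|indec] := classic (exists c1 c2,
  [/\ c = c1 + c2, nonneg (lcomb v c1), nonneg (lcomb v c2), c1 != 0 & c2 != 0]).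
- wlog c1_pos : c1 c2 Ec c1_ge0 c2_ge0 nz1 nz2 / 0 < lcomb v c1 i0.
    move=> wlog_pos; case: (ltrP 0 (lcomb v c1 i0)) => [c1_pos|c1_le0].
      exact: (wlog_pos c1 c2).
    apply: (wlog_pos c2 c1); rewrite 1?addrC //.
    by move: c_pos; rewrite Ec lcombD vecDE; lia.
  have [|a [b [Ec1 a_min b_ge0 a_pos]]] := IHn c1 _ c1_ge0 c1_pos.
    by move: lt_cn nz2; rewrite Ec coef_sizeD -coef_size_gt0; lia.
  exists a, (b + c2); split=> //; first by rewrite Ec Ec1 addrA.
  by move=> i; rewrite lcombD vecDE addr_ge0.
- exists c, 0; split=> //; last by move=> i; rewrite lcomb0 ffunE.
  + by rewrite addr0.
  split=> // c1 c2 Ec c1_ge0 c2_ge0.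
  case: (eqVneq c1 0) => [|nz1]; [by left | right].
  case: (eqVneq c2 0) => // nz2.
  by exfalso; apply: indec; exists c1, c2.
Qed.

Lemma minimal_cover (B : nat) (Q : seq 'I_d) c :
  (forall c1 i, minimal_solution v c1 -> lcomb v c1 i <= B%:Z) ->
  nonneg (lcomb v c) ->
  exists c', [/\ nonneg (lcomb v c'), nonneg (lcomb v c - lcomb v c'),
    {in Q, forall i, 0 < lcomb v c i -> 0 < lcomb v c' i} &
    forall i, lcomb v c' i <= (size Q * B)%N%:Z].
Proof.
move=> minB; elim: Q c => [|i Q IHQ] c c_ge0.
  by exists 0; rewrite lcomb0 subr0; split=> // k; rewrite ffunE.
case: (ltrP 0 (lcomb v c i)) => [c_pos|c_le0]; last first.
  have [c' [c'_ge0 c'_le cover c'_bound]] := IHQ c c_ge0.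
  exists c'; split=> // [k|k].
    by rewrite in_cons => /predU1P[->|/cover//]; rewrite ltNge c_le0.
  by apply: le_trans (c'_bound k) _; rewrite lez_nat leq_mul2r leqnSn orbT.
have [c1 [c2 [-> c1_min c2_ge0 c1_pos]]] := exists_minimal_part c_ge0 c_pos.
have [c' [c'_ge0 c'_le cover c'_bound]] := IHQ c2 c2_ge0.
exists (c1 + c'); rewrite !lcombD; split.
- by move=> k; rewrite vecDE addr_ge0 ?c'_ge0 ?c1_min.1.
- by move=> k; have := c'_le k; rewrite !vecBE !vecDE opprD addrACA subrr add0r.
- move=> k; rewrite in_cons !vecDE => /predU1P[->|kQ] c_pos_k.
    exact: ltr_wpDr (c'_ge0 i) c1_pos.
  by have := c'_ge0 k; have := c1_min.1 k; have := cover k kQ; lia.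
- by move=> k; rewrite vecDE mulSn PoszD lerD ?minB.
Qed.

End Decomposition.

Lemma coord_le_snorm d (A : seq (vec d)) a i : a \in A -> (`|a i|%N <= snorm A)%N.
Proof.
move=> aA; apply: leq_trans (leq_bigmax_seq (F := @vnorm d) _ aA isT).
exact: (leq_bigmax (F := fun i => `|a i|%N)).
Qed.

Lemma vle_nonneg d (x y : vec d) : nonneg x -> nonneg (y - x) ->
  (forall i, 0 < y i -> 0 < x i) -> vle x y.
Proof.
move=> x_ge0 yx_ge0 pos i; have := yx_ge0 i; rewrite vecBE subr_ge0 => le_xy.
have y_ge0 := le_trans (x_ge0 i) le_xy.
rewrite -lez_nat !abszE !ger0_norm //; split=> //.
case: (ltrP 0 (y i)) => [y_pos|y_le0]; first by rewrite !gtr0_sgz ?pos.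
have y0 : y i = 0 by apply/eqP; rewrite eq_le y_le0.
have x0 : x i = 0 by apply/eqP; rewrite eq_le x_ge0 -y0 le_xy.
by rewrite x0 y0.
Qed.

Lemma nonneg_minimal_vnorm_le d (A : seq (vec d)) y :
  minimal_in (in_monoid A) y -> nonneg y ->
  (vnorm y <= d * (snorm A * (2 * snorm A + 1) ^ d + 1) ^ d)%N.
Proof.
move=> [yA ymin] y_ge0; set V := undup A.
pose v (j : 'I_(size V)) := V`_j.
have vA j : v j \in A by rewrite -mem_undup mem_nth.
have v_inj : injective v.
  by move=> j k /eqP; rewrite nth_uniq ?undup_uniq // => /eqP/val_inj.
have v_bound j i : `|v j i| <= (snorm A)%:Z by rewrite -abszE lez_nat coord_le_snorm.
have [c Ey] : exists c, y = lcomb v c.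
  apply: lcomb_of_in_monoid yA => a aA.
  have lt_aV : (index a V < size V)%N by rewrite index_mem mem_undup.
  by exists (Ordinal lt_aV); rewrite /v nth_index ?mem_undup.
rewrite Ey in y_ge0.
have [c' [c'_ge0 c'_le cover c'_bound]] :=
  minimal_cover (enum 'I_d) (fun c1 i => minimal_solution_le i v_bound v_inj) y_ge0.
have Ec' : lcomb v c' = y.
  apply: ymin; first exact: in_monoid_lcomb.
  by rewrite Ey; apply: vle_nonneg => // i; apply/cover; rewrite mem_enum.
apply/bigmax_leqP => i _; rewrite -lez_nat abszE ger0_norm -Ec' //.
by have := c'_bound i; rewrite size_enum_ord.
Qed.

Lemma in_monoid_map d d' (f : vec d -> vec d') (A : seq (vec d)) x :
  f 0 = 0 -> {morph f : x y / x + y} -> in_monoid A x -> in_monoid (map f A) (f x).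
Proof.
move=> f0 fD; elim=> [|y a _ IHy aA]; first by rewrite f0; constructor.
by rewrite fD; constructor=> //; apply: map_f.
Qed.

Lemma minimal_in_map d (f : vec d -> vec d) (A : seq (vec d)) y :
  f 0 = 0 -> {morph f : x y / x + y} -> involutive f ->
  (forall x z, vle x z -> vle (f x) (f z)) ->
  minimal_in (in_monoid A) y -> minimal_in (in_monoid (map f A)) (f y).
Proof.
move=> f0 fD fK f_vle [yA ymin]; split; first exact: in_monoid_map.
move=> x xA x_le; rewrite -[x]fK; congr f; apply: ymin.
  by rewrite -[A](mapK fK); apply: in_monoid_map.
by rewrite -[y]fK; apply: f_vle.
Qed.

Section SignFlip.
Variables (d : nat) (s : vec d).

Definition sign_flip (x : vec d) : vec d := [ffun i => if s i < 0 then - x i else x i].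

Lemma sign_flip0 : sign_flip 0 = 0.
Proof. by apply/ffunP => i; rewrite !ffunE oppr0 if_same. Qed.

Lemma sign_flipD : {morph sign_flip : x y / x + y}.
Proof.
by move=> x y; apply/ffunP => i; rewrite !ffunE; case: (s i < 0); rewrite ?opprD.
Qed.

Lemma sign_flipK : involutive sign_flip.
Proof.
by move=> x; apply/ffunP => i; rewrite !ffunE; case: (s i < 0); rewrite ?opprK.
Qed.

Lemma absz_sign_flip x i : `|sign_flip x i|%N = `|x i|%N.
Proof. by rewrite ffunE; case: (s i < 0); rewrite ?abszN. Qed.

Lemma vle_sign_flip x z : vle x z -> vle (sign_flip x) (sign_flip z).
Proof.
move=> le_xz i; rewrite !absz_sign_flip !ffunE; case: (le_xz i) => sg_xz le.
by case: (s i < 0); rewrite ?sgzN ?sg_xz.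
Qed.

Lemma sign_flip_self_nonneg : nonneg (sign_flip s).
Proof. by move=> i; rewrite ffunE; case: ltrP => [/ltW|//]; rewrite oppr_ge0. Qed.

Lemma vnorm_sign_flip x : vnorm (sign_flip x) = vnorm x.
Proof. by apply: eq_bigr => i _; rewrite absz_sign_flip. Qed.

Lemma snorm_sign_flip (A : seq (vec d)) : snorm (map sign_flip A) = snorm A.
Proof. by rewrite /snorm big_map; apply: eq_bigr => a _; rewrite vnorm_sign_flip. Qed.

End SignFlip.

Theorem lemma10 (d : nat) (A : seq (vec d)) (y : vec d) :
  minimal_in (in_monoid A) y ->
  (vnorm y <= d * (2 + (1 + 2 * snorm A) ^ d * snorm A) ^ d)%N.
Proof.
move=> ymin.
have flip_min := minimal_in_map (sign_flip0 y) (sign_flipD y) (sign_flipK y)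
  (@vle_sign_flip d y) ymin.
rewrite -(vnorm_sign_flip y y) -(snorm_sign_flip y A).
apply: leq_trans (nonneg_minimal_vnorm_le flip_min (sign_flip_self_nonneg y)) _.
rewrite leq_mul2l; apply/orP; right; apply: leq_exp2rW.
by rewrite [(2 * _ + 1)%N]addnC; lia.
Qed.
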